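(* Let $\beta,\delta\in(0,1)$, $K>0$, and let $\eta_1,\eta_2\ge0$ be constants with $\delta>\eta_2$. Consider $$\frac{df}{dt}=\tfrac12 fm\beta L-\delta f-\eta_1 f,\qquad \frac{dm}{dt}=\tfrac12 fm\beta L-\delta m+\eta_2 m,\qquad L=1-\frac{f+m}{K}.$$ If $\beta K<2\delta+\eta_1-\eta_2$, then the equilibrium $(0,0)$ is globally asymptotically stable.
   Context: $f$ and $m$ are female and male densities. $\eta_1$ is the female removal (harvesting) rate and $\eta_2$ the male addition (stocking) rate; this is the ''female harvesting male stocking'' model. The standing assumption is $\delta>\eta_2$ whenever $\eta_2\neq0$. *)

From Stdlib Require Import Reals.
From Coquelicot Require Import Coquelicot.
Open Scope R_scope.

Definition Lfac (K f m : R) : R := 1 - (f + m) / K.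

Definition rhs_f (beta delta eta1 K f m : R) : R :=
  / 2 * f * m * beta * Lfac K f m - delta * f - eta1 * f.
Definition rhs_m (beta delta eta2 K f m : R) : R :=
  / 2 * f * m * beta * Lfac K f m - delta * m + eta2 * m.

Definition is_solution (beta delta eta1 eta2 K : R) (f m : R -> R) : Prop :=
  (forall t, 0 < t ->
     is_derive f t (rhs_f beta delta eta1 K (f t) (m t)) /\
     is_derive m t (rhs_m beta delta eta2 K (f t) (m t))) /\
  filterlim f (at_right 0) (locally (f 0)) /\
  filterlim m (at_right 0) (locally (m 0)).

Definition GAS_origin (beta delta eta1 eta2 K : R) : Prop :=
  (forall eps, 0 < eps -> exists d, 0 < d /\
     forall f m, is_solution beta delta eta1 eta2 K f m ->
       0 <= f 0 -> 0 <= m 0 -> f 0 < d -> m 0 < d ->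
       forall t, 0 <= t -> Rabs (f t) < eps /\ Rabs (m t) < eps) /\
  (forall f m, is_solution beta delta eta1 eta2 K f m ->
     0 <= f 0 -> 0 <= m 0 ->
     is_lim f p_infty 0 /\ is_lim m p_infty 0).

From Stdlib Require Import Reals Lra.
From Coquelicot Require Import Coquelicot.
Open Scope R_scope.

(* Both densities solve linear equations x' = x h with locally bounded rates h,
   so they stay nonnegative.  Then m L <= K/4, hence f' <= -c f with
   c = delta + eta1 - beta K / 8 > 0 and f decays like e^(-c t); and f L <= f, so
   m' <= (beta f(0) e^(-c t) / 2 - (delta - eta2)) m, which integrates to
   m(t) <= m(0) e^(beta f(0) / (2 c)) e^(-(delta - eta2) t).  Every comparison step is the Gronwall
   argument: if x >= 0 and h <= k', then x e^(-k) is nonincreasing. *)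

Lemma at_right_iff s (P : R -> Prop) :
  at_right s P <-> exists d, 0 < d /\ forall u, s < u < s + d -> P u.
Proof.
  split.
  - intros [d Hd]. exists d. split; [apply cond_pos|].
    intros u Hu. apply Hd; [|lra].
    change (Rabs (u - s) < d). rewrite Rabs_right; lra.
  - intros [d [Hd HP]]. exists (mkposreal d Hd). intros u Hu Hsu. apply HP.
    change (Rabs (u - s) < d) in Hu. apply Rabs_def2 in Hu. simpl. lra.
Qed.

Lemma exp_le_exp x y : x <= y -> exp x <= exp y.
Proof. intros [H|<-]; [apply Rlt_le, exp_increasing, H | lra]. Qed.

Lemma right_continuous_of_derive (g : R -> R) (t l : R) :
  is_derive g t l -> filterlim g (at_right t) (locally (g t)).
Proof.
  intros Hd P HP. apply filter_le_within.
  exact (ex_derive_continuous g t (ex_intro _ l Hd) P HP).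
Qed.

Lemma abs_bound_of_right_continuous (g : R -> R) (s : R) :
  filterlim g (at_right s) (locally (g s)) -> at_right s (fun u => Rabs (g u) <= Rabs (g s) + 1).
Proof.
  intros Hg. apply (Hg (fun y => Rabs y <= Rabs (g s) + 1)).
  exists (mkposreal 1 Rlt_0_1). intros y Hy. change (Rabs (y - g s) < 1) in Hy.
  pose proof (Rabs_triang_inv y (g s)). lra.
Qed.

Lemma nonincreasing_of_derive_nonpos (g g' : R -> R) (a b : R) : a <= b ->
  (forall u, a < u <= b -> is_derive g u (g' u)) ->
  (forall u, a < u <= b -> g' u <= 0) ->
  filterlim g (at_right a) (locally (g a)) -> g b <= g a.
Proof.
  intros [Hab| <-] Hd Hneg Hcont; [|lra].
  assert (Hinterior : forall x, a < x < b -> g b <= g x).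
  { intros x Hx.
    destruct (MVT_gen g x b g') as [c [Hc Hmvt]].
    - intros y Hy. rewrite Rmin_left, Rmax_right in Hy by lra. apply Hd. lra.
    - intros y Hy. rewrite Rmin_left, Rmax_right in Hy by lra.
      apply continuity_pt_filterlim, (ex_derive_continuous g y).
      exists (g' y). apply Hd. lra.
    - rewrite Rmin_left, Rmax_right in Hc by lra.
      assert (g' c <= 0) by (apply Hneg; lra). nra. }
  apply (closed_filterlim_loc g (fun y => g b <= y) (g a) Hcont); [|apply closed_ge].
  apply at_right_iff. exists (b - a). split; [lra|].
  intros u Hu. apply Hinterior. lra.
Qed.

Lemma is_derive_exp_weight (x k : R -> R) (t dx dk : R) :
  is_derive x t dx -> is_derive k t dk ->
  is_derive (fun u => x u * exp (- k u)) t (exp (- k t) * (dx - x t * dk)).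
Proof.
  intros Hx Hk.
  assert (Hw := is_derive_mult x (fun u => exp (- k u)) t dx _ Hx
    (is_derive_comp exp (fun u => - k u) t _ _ (is_derive_exp _) (is_derive_opp k t dk Hk))
    Rmult_comm).
  replace (exp (- k t) * (dx - x t * dk)) with
    (plus (mult dx (exp (- k t))) (mult (x t) (scal (opp dk) (exp (- k t))))).
  - exact Hw.
  - unfold plus, mult, scal, opp; simpl. unfold mult; simpl. ring.
Qed.

Lemma linear_ode_upper_bound (x h k k' : R -> R) (a b : R) : a <= b ->
  (forall u, a < u <= b -> is_derive x u (x u * h u)) ->
  (forall u, a <= u <= b -> is_derive k u (k' u)) ->
  (forall u, a < u <= b -> 0 <= x u /\ h u <= k' u) ->
  filterlim x (at_right a) (locally (x a)) ->
  x b <= x a * exp (k b - k a).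
Proof.
  intros Hab Hx Hk Hsign Hcont.
  assert (Hw : x b * exp (- k b) <= x a * exp (- k a)).
  { apply (nonincreasing_of_derive_nonpos (fun u => x u * exp (- k u))
      (fun u => exp (- k u) * (x u * h u - x u * k' u)) a b Hab).
    - intros u Hu. apply is_derive_exp_weight; [apply Hx | apply Hk]; lra.
    - intros u Hu. destruct (Hsign u Hu). pose proof (exp_pos (- k u)).
      assert (x u * (h u - k' u) <= 0) by nra. nra.
    - assert (Hexp : filterlim (fun u => exp (- k u)) (at_right a) (locally (exp (- k a)))).
      { apply (right_continuous_of_derive _ _ _ (is_derive_comp exp (fun u => - k u) a _ _
          (is_derive_exp _) (is_derive_opp k a _ (Hk a ltac:(lra))))). }
      apply (filterlim_comp_2 x (fun u => exp (- k u)) Rmult Hcont Hexp).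
      exact (filterlim_mult (K := R_AbsRing) (x a) (exp (- k a))). }
  rewrite !exp_Ropp in Hw.
  unfold Rminus. rewrite exp_plus, exp_Ropp.
  assert (Hb := exp_pos (k b)).
  apply (Rmult_le_compat_r (exp (k b))) in Hw; [|lra].
  replace (x b * / exp (k b) * exp (k b)) with (x b) in Hw by (field; lra).
  lra.
Qed.

Lemma last_nonneg_point (x : R -> R) (t1 : R) : 0 < t1 ->
  (forall t, 0 < t <= t1 -> continuous x t) -> 0 <= x 0 -> x t1 < 0 ->
  exists s, 0 <= s < t1 /\ 0 <= x s /\ forall u, s < u <= t1 -> x u < 0.
Proof.
  intros Ht1 Hcont Hx0 Hxt1.
  set (E := fun t => 0 <= t <= t1 /\ 0 <= x t).
  destruct (completeness E) as [s [Hub Hlub]].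
  { exists t1. intros y [Hy _]. lra. }
  { exists 0. split; lra. }
  assert (Hs0 : 0 <= s) by (apply Hub; split; lra).
  assert (Hst1 : s <= t1) by (apply Hlub; intros y [Hy _]; lra).
  assert (Hafter : forall u, s < u <= t1 -> x u < 0).
  { intros u Hu. destruct (Rlt_or_le (x u) 0) as [H|H]; [exact H|].
    assert (u <= s) by (apply Hub; split; lra). lra. }
  assert (Hxs : 0 <= x s).
  { destruct Hs0 as [Hs|<-]; [|exact Hx0].
    destruct (Rle_or_lt 0 (x s)) as [H|H]; [exact H|exfalso].
    destruct (Hcont s ltac:(lra) _ (open_lt 0 (x s) H)) as [d Hd].
    assert (Hd0 := cond_pos d).
    assert (s <= s - d / 2); [|lra].
    apply Hlub. intros y [Hy Hxy].
    destruct (Rle_or_lt y (s - d / 2)) as [H1|H1]; [exact H1|].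
    assert (y <= s) by (apply Hub; split; auto).
    assert (x y < 0); [|lra].
    apply Hd. change (Rabs (y - s) < d). rewrite Rabs_left1; lra. }
  exists s. repeat split; auto.
  destruct Hst1 as [|<-]; [assumption | lra].
Qed.

Lemma nonneg_of_linear_ode (x h : R -> R) :
  (forall t, 0 < t -> is_derive x t (x t * h t)) ->
  filterlim x (at_right 0) (locally (x 0)) ->
  (forall s, 0 <= s -> exists M, at_right s (fun u => h u <= M)) ->
  0 <= x 0 -> forall t, 0 <= t -> 0 <= x t.
Proof.
  intros Hx Hx0 Hh Hpos0 t1 Ht1.
  destruct (Rle_or_lt 0 (x t1)) as [|Hneg]; [assumption|exfalso].
  assert (Ht1' : 0 < t1) by (destruct Ht1 as [|<-]; lra).
  destruct (last_nonneg_point x t1 Ht1') as [s [Hs [Hxs Hafter]]]; auto.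
  { intros t Ht. exact (ex_derive_continuous x t (ex_intro _ _ (Hx t (proj1 Ht)))). }
  destruct (Hh s (proj1 Hs)) as [M HM].
  apply at_right_iff in HM as [d [Hd HM]].
  set (t := Rmin (s + d / 2) t1).
  assert (Ht : s < t <= t1 /\ t < s + d).
  { pose proof (Rmin_l (s + d / 2) t1). pose proof (Rmin_r (s + d / 2) t1).
    assert (s < t) by (apply Rmin_glb_lt; lra). unfold t in *. lra. }
  (* On (s, t] the function - x is a nonnegative solution with rate h <= M. *)
  assert (Hbound : - x t <= - x s * exp (M * t - M * s)).
  { apply (linear_ode_upper_bound (fun u => - x u) h (fun u => M * u) (fun _ => M)); [lra | | | |].
    - intros u Hu. replace (- x u * h u) with (- (x u * h u)) by ring.
      exact (is_derive_opp x u _ (Hx u ltac:(lra))).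
    - intros u _. auto_derive; auto; ring.
    - intros u Hu. split; [|apply HM; lra].
      assert (x u < 0) by (apply Hafter; lra). lra.
    - destruct (proj1 Hs) as [Hs0|<-].
      + exact (right_continuous_of_derive _ _ _ (is_derive_opp x s _ (Hx s Hs0))).
      + exact (filterlim_comp _ _ _ x Ropp _ _ _ Hx0 (filterlim_opp (V := R_NormedModule) (x 0))). }
  assert (x t < 0) by (apply Hafter; lra).
  assert (0 < exp (M * t - M * s)) by apply exp_pos.
  nra.
Qed.

Lemma is_lim_zero_of_exp_bound (g : R -> R) (C r : R) : 0 < r ->
  (forall t, 0 <= t -> 0 <= g t <= C * exp (- r * t)) -> is_lim g p_infty 0.
Proof.
  intros Hr Hg.
  apply (is_lim_le_le_loc (fun _ => 0) (fun t => C * exp (- r * t))).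
  - exists 0. intros t Ht. apply Hg. lra.
  - apply is_lim_const.
  - replace (Finite 0) with (Rbar_mult C 0) by (simpl; f_equal; ring).
    apply is_lim_scal_l.
    apply (is_lim_comp exp (fun t => - r * t) p_infty 0 m_infty is_lim_exp_m).
    + intros P [M HM]. exists (- M / r). intros t Ht. apply HM.
      apply (Rmult_lt_compat_l r) in Ht; [|lra].
      replace (r * (- M / r)) with (- M) in Ht by (field; lra). lra.
    + exists 0. intros t _. discriminate.
Qed.

Lemma mul_Lfac_le_of_abs_le (K p q r B : R) : 0 < K ->
  Rabs p <= B -> Rabs q <= B -> Rabs r <= B -> r * Lfac K p q <= B * (1 + 2 * B / K).
Proof.
  intros HK Hp Hq Hr. unfold Lfac.
  assert (Hpq : Rabs ((p + q) / K) <= 2 * B / K).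
  { unfold Rdiv.
    rewrite Rabs_mult, (Rabs_right (/ K)) by (apply Rle_ge, Rlt_le, Rinv_0_lt_compat, HK).
    apply Rmult_le_compat_r; [apply Rlt_le, Rinv_0_lt_compat, HK|].
    pose proof (Rabs_triang p q). lra. }
  assert (HL : Rabs (1 - (p + q) / K) <= 1 + 2 * B / K).
  { unfold Rminus. eapply Rle_trans; [apply Rabs_triang|].
    rewrite Rabs_Ropp, Rabs_R1. lra. }
  eapply Rle_trans; [apply Rle_abs|]. rewrite Rabs_mult.
  apply Rmult_le_compat; auto using Rabs_pos.
Qed.

Lemma mul_Lfac_le_quarter (K p q : R) : 0 < K -> 0 <= p -> 0 <= q -> q * Lfac K p q <= K / 4.
Proof.
  intros HK Hp Hq. unfold Lfac.
  assert (Hsq : 0 <= ((q - K / 2) ^ 2 + p * q) / K).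
  { apply Rdiv_le_0_compat; [pose proof (pow2_ge_0 (q - K / 2)); nra | exact HK]. }
  replace (((q - K / 2) ^ 2 + p * q) / K) with (K / 4 - q * (1 - (p + q) / K)) in Hsq
    by (field; lra).
  lra.
Qed.

Lemma mul_Lfac_le_self (K p q : R) : 0 < K -> 0 <= p -> 0 <= q -> p * Lfac K p q <= p.
Proof.
  intros HK Hp Hq. unfold Lfac.
  assert (0 <= p * ((p + q) / K)) by (apply Rmult_le_pos; [lra | apply Rdiv_le_0_compat; lra]).
  lra.
Qed.

Section Solution.

Variables beta delta eta1 eta2 K : R.
Hypothesis beta_pos : 0 < beta.
Hypothesis K_pos : 0 < K.
Variables f m : R -> R.
Hypothesis solves : is_solution beta delta eta1 eta2 K f m.
Hypothesis f0_nonneg : 0 <= f 0.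
Hypothesis m0_nonneg : 0 <= m 0.

Local Notation c := (delta + eta1 - beta * K / 8).

Let rate_f u := beta / 2 * m u * Lfac K (f u) (m u) - delta - eta1.
Let rate_m u := beta / 2 * f u * Lfac K (f u) (m u) - delta + eta2.

Let is_derive_f t : 0 < t -> is_derive f t (f t * rate_f t).
Proof.
  intros Ht. replace (f t * rate_f t) with (rhs_f beta delta eta1 K (f t) (m t))
    by (unfold rhs_f, rate_f; field).
  apply (proj1 solves t Ht).
Qed.

Let is_derive_m t : 0 < t -> is_derive m t (m t * rate_m t).
Proof.
  intros Ht. replace (m t * rate_m t) with (rhs_m beta delta eta2 K (f t) (m t))
    by (unfold rhs_m, rate_m; field).
  apply (proj1 solves t Ht).
Qed.

Let right_continuous s : 0 <= s ->
  filterlim f (at_right s) (locally (f s)) /\ filterlim m (at_right s) (locally (m s)).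
Proof.
  intros [Hs|<-]; [|exact (proj2 solves)].
  split; eapply right_continuous_of_derive; [apply is_derive_f | apply is_derive_m]; exact Hs.
Qed.

Let rates_locally_bounded_above s : 0 <= s ->
  exists M, at_right s (fun u => rate_f u <= M /\ rate_m u <= M).
Proof.
  intros Hs. destruct (right_continuous s Hs) as [Hf Hm].
  set (B := Rmax (Rabs (f s)) (Rabs (m s)) + 1).
  assert (HfB : at_right s (fun u => Rabs (f u) <= B)).
  { apply (filter_imp _ _ (fun u Hu => Rle_trans _ _ _ Hu (Rplus_le_compat_r 1 _ _ (Rmax_l _ _)))).
    exact (abs_bound_of_right_continuous f s Hf). }
  assert (HmB : at_right s (fun u => Rabs (m u) <= B)).
  { apply (filter_imp _ _ (fun u Hu => Rle_trans _ _ _ Hu (Rplus_le_compat_r 1 _ _ (Rmax_r _ _)))).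
    exact (abs_bound_of_right_continuous m s Hm). }
  exists (beta / 2 * (B * (1 + 2 * B / K)) + Rabs delta + Rabs eta1 + Rabs eta2).
  refine (filter_imp _ _ _ (filter_and _ _ HfB HmB)). intros u [Hfu Hmu].
  assert (Hbeta : 0 <= beta / 2) by lra.
  pose proof (Rmult_le_compat_l _ _ _ Hbeta
    (mul_Lfac_le_of_abs_le K (f u) (m u) (m u) B K_pos Hfu Hmu Hmu)).
  pose proof (Rmult_le_compat_l _ _ _ Hbeta
    (mul_Lfac_le_of_abs_le K (f u) (m u) (f u) B K_pos Hfu Hmu Hfu)).
  pose proof (Rle_abs (- delta)). pose proof (Rle_abs (- eta1)). pose proof (Rle_abs eta2).
  pose proof (Rabs_pos eta1). pose proof (Rabs_pos eta2).
  rewrite !Rabs_Ropp in *. unfold rate_f, rate_m. lra.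
Qed.

Lemma solution_nonneg t : 0 <= t -> 0 <= f t /\ 0 <= m t.
Proof.
  intros Ht. split.
  - apply (nonneg_of_linear_ode f rate_f is_derive_f (proj1 (right_continuous 0 (Rle_refl 0))));
      auto.
    intros s Hs. destruct (rates_locally_bounded_above s Hs) as [M HM].
    exists M. exact (filter_imp _ _ (fun u Hu => proj1 Hu) HM).
  - apply (nonneg_of_linear_ode m rate_m is_derive_m (proj2 (right_continuous 0 (Rle_refl 0))));
      auto.
    intros s Hs. destruct (rates_locally_bounded_above s Hs) as [M HM].
    exists M. exact (filter_imp _ _ (fun u Hu => proj2 Hu) HM).
Qed.

Lemma female_exp_decay t : 0 <= t -> f t <= f 0 * exp (- c * t).
Proof.
  intros Ht. replace (- c * t) with (- c * t - - c * 0) by ring.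
  apply (linear_ode_upper_bound f rate_f (fun u => - c * u) (fun _ => - c)); auto.
  - intros u Hu. apply is_derive_f. lra.
  - intros u _. auto_derive; auto; ring.
  - intros u Hu. destruct (solution_nonneg u ltac:(lra)) as [Hfu Hmu]. split; [exact Hfu|].
    pose proof (mul_Lfac_le_quarter K (f u) (m u) K_pos Hfu Hmu).
    unfold rate_f. nra.
  - exact (proj1 (right_continuous 0 (Rle_refl 0))).
Qed.

Lemma male_exp_decay t : 0 < c -> 0 <= t ->
  m t <= m 0 * exp (beta / (2 * c) * f 0) * exp (- (delta - eta2) * t).
Proof.
  intros Hc Ht. set (P := beta / (2 * c) * f 0).
  assert (HP : 0 <= P) by (apply Rmult_le_pos; [apply Rdiv_le_0_compat|]; lra).
  (* k is a primitive of - (delta - eta2) + beta / 2 * f 0 * exp (- c u), which bounds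
     rate_m u from above because f L <= f and f u <= f 0 * exp (- c u). *)
  set (k := fun u => - (delta - eta2) * u - P * exp (- c * u)).
  apply Rle_trans with (m 0 * exp (k t - k 0)).
  - apply (linear_ode_upper_bound m rate_m k
      (fun u => - (delta - eta2) + beta / 2 * f 0 * exp (- c * u))); auto.
    + intros u Hu. apply is_derive_m. lra.
    + intros u _. unfold k, P. auto_derive; auto. field. lra.
    + intros u Hu. destruct (solution_nonneg u ltac:(lra)) as [Hfu Hmu]. split; [exact Hmu|].
      pose proof (mul_Lfac_le_self K (f u) (m u) K_pos Hfu Hmu).
      pose proof (female_exp_decay u ltac:(lra)).
      unfold rate_m. nra.
    + exact (proj2 (right_continuous 0 (Rle_refl 0))).
  - rewrite Rmult_assoc, <- exp_plus. apply Rmult_le_compat_l; [exact m0_nonneg|].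
    apply exp_le_exp. unfold k. rewrite Rmult_0_r, Rmult_0_r, exp_0.
    pose proof (exp_pos (- c * t)). nra.
Qed.

Lemma solution_exp_bounds t : 0 < c -> 0 <= t ->
  0 <= f t <= f 0 * exp (- c * t) /\
  0 <= m t <= m 0 * exp (beta / (2 * c) * f 0) * exp (- (delta - eta2) * t).
Proof.
  intros Hc Ht. destruct (solution_nonneg t Ht).
  split; split; auto using female_exp_decay, male_exp_decay.
Qed.

End Solution.

Lemma exp_decay_le (C r t : R) : 0 <= C -> 0 <= r -> 0 <= t -> C * exp (- r * t) <= C.
Proof.
  intros HC Hr Ht. rewrite <- (Rmult_1_r C) at 2. apply Rmult_le_compat_l; [exact HC|].
  rewrite <- exp_0. apply exp_le_exp. nra.
Qed.

Theorem mainTheorem4 (beta delta K eta1 eta2 : R) :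
  0 < beta < 1 -> 0 < delta < 1 -> 0 < K ->
  0 <= eta1 -> 0 <= eta2 -> eta2 < delta ->
  beta * K < 2 * delta + eta1 - eta2 ->
  GAS_origin beta delta eta1 eta2 K.
Proof.
  intros Hbeta Hdelta HK Heta1 Heta2 Heta2_lt HbK.
  set (c := delta + eta1 - beta * K / 8).
  assert (Hc : 0 < c) by (unfold c; lra).
  assert (Hbounds := fun f m Hsol Hf0 Hm0 t =>
    solution_exp_bounds beta delta eta1 eta2 K (proj1 Hbeta) HK f m Hsol Hf0 Hm0 t Hc).
  fold c in Hbounds. set (Q := beta / (2 * c)) in Hbounds.
  split.
  - intros eps Heps. pose proof (exp_pos Q).
    assert (HQ0 : 0 <= Q) by (apply Rdiv_le_0_compat; lra).
    assert (HQ : 1 <= exp Q) by (rewrite <- exp_0; apply exp_le_exp, HQ0).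
    exists (Rmin 1 (eps / exp Q)).
    split; [apply Rmin_glb_lt; [lra | apply Rdiv_lt_0_compat; lra]|].
    intros f m Hsol Hf0 Hm0 Hfd Hmd t Ht.
    pose proof (Rmin_l 1 (eps / exp Q)). pose proof (Rmin_r 1 (eps / exp Q)).
    assert (Hf0_eps : f 0 < eps)
      by (apply Rlt_le_trans with (eps / exp Q); [lra | apply Rle_div_l; nra]).
    assert (Hm0_eps : m 0 * exp Q < eps) by (apply Rlt_div_r; lra).
    assert (m 0 * exp (Q * f 0) <= m 0 * exp Q) by (apply Rmult_le_compat_l, exp_le_exp; nra).
    destruct (Hbounds f m Hsol Hf0 Hm0 t Ht) as [[Hf Hfb] [Hm Hmb]].
    pose proof (exp_decay_le (f 0) c t Hf0 (Rlt_le _ _ Hc) Ht).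
    pose proof (exp_decay_le (m 0 * exp (Q * f 0)) (delta - eta2) t
      (Rmult_le_pos _ _ Hm0 (Rlt_le _ _ (exp_pos _))) ltac:(lra) Ht).
    rewrite !Rabs_right by lra. split; lra.
  - intros f m Hsol Hf0 Hm0. split.
    + apply (is_lim_zero_of_exp_bound f (f 0) c Hc).
      intros t Ht. apply (Hbounds f m Hsol Hf0 Hm0 t Ht).
    + apply (is_lim_zero_of_exp_bound m (m 0 * exp (Q * f 0)) (delta - eta2)); [lra|].
      intros t Ht. apply (Hbounds f m Hsol Hf0 Hm0 t Ht).
Qed.
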